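(* Let $P_0$ be a domain, $U$ a free $P_0$-module of rank four with dual $U^*=\operatorname{Hom}_{P_0}(U,P_0)$, and $x,y,z,w$ a basis of $U$ with dual basis $x^*,y^*,z^*,w^*$. Let $$\phi_3=x^{*(3)}+ax^*z^{*(2)}+dy^*z^{*(2)}+ey^*z^*w^*+fy^*w^{*(2)}+gy^{*(2)}z^*+hy^{*(2)}w^*+iy^{*(3)}+jz^{*(3)}+kz^{*(2)}w^*+lz^*w^{*(2)}+mw^{*(3)}\in D_3U^*$$ with $a,d,e,\dots,m\in P_0$. Assume (a) $a\neq0$ in $P_0$ and (b) $\ell\phi_3\neq0$ for all nonzero $\ell\in U$. Then $\Gamma_{\phi_3}$ is not identically zero.
   Context: $D_iU^*=\operatorname{Hom}_{P_0}(\operatorname{Sym}_iU,P_0)$; $D_\bullet U^*$ is the divided power algebra, a module over $\operatorname{Sym}_\bullet U$ via $(uv)(u')=v(uu')$. The divided power monomial $x^{*(a_1)}y^{*(a_2)}z^{*(a_3)}w^{*(a_4)}$ takes value $1$ on $x^{a_1}y^{a_2}z^{a_3}w^{a_4}$ and $0$ on all other monomials of that degree; a factor without parenthesized exponent has exponent one. $D_4U$ is the degree-$4$ divided power of $U$. For $X\in D_4U$, $\Delta(X)\in U^{\otimes4}$ is its comultiplication: for $X=\ell_1^{(e_1)}\cdots\ell_s^{(e_s)}$ with $\sum e_j=4$, $\Delta(X)$ is the sum of all distinct words $u_1\otimes\cdots\otimes u_4$ in which the symbol $\ell_j$ occurs exactly $e_j$ times, extended linearly. $\Gamma_{\phi_3}:D_4U\otimes\bigwedge^4U\to\bigwedge^4U^*$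 is the $P_0$-linear map $\Gamma_{\phi_3}(X\otimes y_1\wedge\cdots\wedge y_4)=\sum(u_1y_1\phi_3)\wedge\cdots\wedge(u_4y_4\phi_3)$, summed over the terms of $\Delta(X)$. *)

From HB Require Import structures.
From mathcomp Require Import all_boot all_order all_algebra.
Set Implicit Arguments. Unset Strict Implicit. Unset Printing Implicit Defensive.
Import Order.TTheory GRing.Theory Num.Theory.
Local Open Scope ring_scope.

(* U = free P0-module of rank 4, realised as 'rV[R]_4 with standard basis
   b 0 = x, b 1 = y, b 2 = z, b 3 = w. *)
Definition bas (R : idomainType) (i : 'I_4) : 'rV[R]_4 := delta_mx 0 i.

(* An element of D_n U^* = Hom(Sym_n U, P0) is given by its values on the
   monomials of Sym_n U, indexed by exponent vectors ('I_4 -> nat). *)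
Definition cubic (R : idomainType) := ('I_4 -> nat) -> R.

Definition expo3 (i j k : 'I_4) : 'I_4 -> nat :=
  fun l => ((i == l) + (j == l) + (k == l))%N.

Definition phi3 (R : idomainType) (a d e f g h i j k l m : R) : cubic R :=
  fun n =>
  match (n ord0 : nat), (n (inord 1) : nat), (n (inord 2) : nat), (n (inord 3) : nat) with
  | 3%N, 0%N, 0%N, 0%N => 1
  | 1%N, 0%N, 2%N, 0%N => a
  | 0%N, 1%N, 2%N, 0%N => d
  | 0%N, 1%N, 1%N, 1%N => e
  | 0%N, 1%N, 0%N, 2%N => f
  | 0%N, 2%N, 1%N, 0%N => g
  | 0%N, 2%N, 0%N, 1%N => h
  | 0%N, 3%N, 0%N, 0%N => i
  | 0%N, 0%N, 3%N, 0%N => j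
  | 0%N, 0%N, 2%N, 1%N => k
  | 0%N, 0%N, 1%N, 2%N => l
  | 0%N, 0%N, 0%N, 3%N => m
  | _, _, _, _ => 0
  end.

(* phi (u v w) for u v w in U, i.e. phi evaluated on the product u v w in Sym_3 U *)
Definition evalc (R : idomainType) (phi : cubic R) (u v w : 'rV[R]_4) : R :=
  \sum_(i < 4) \sum_(j < 4) \sum_(k < 4)
     u 0 i * v 0 j * w 0 k * phi (expo3 i j k).

(* l phi in D_2 U^*, given by its values (l phi)(b_j b_k) = phi(l b_j b_k) *)
Definition contr1 (R : idomainType) (phi : cubic R) (l : 'rV[R]_4) : 'M[R]_4 :=
  \matrix_(j, k) evalc phi l (bas R j) (bas R k).

(* u v phi in U^*, given by its coordinates in the dual basis:
   (u v phi)(b_k) = phi(u v b_k) *)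
Definition contr2 (R : idomainType) (phi : cubic R) (u v : 'rV[R]_4) : 'rV[R]_4 :=
  \row_k evalc phi u v (bas R k).

(* D_4 U: free with basis the divided power monomials
   x^{(n0)} y^{(n1)} z^{(n2)} w^{(n3)}, n0+n1+n2+n3 = 4, indexed by
   exponent vectors n : {ffun 'I_4 -> 'I_5}.  An element X of D_4 U is a
   coefficient function on these (coefficients at exponent vectors of total
   degree <> 4 are ignored). *)
Definition expvec := {ffun 'I_4 -> 'I_5}.
Definition deg4 (n : expvec) : bool := (\sum_(l < 4) (n l : nat) == 4)%N.
Definition D4 (R : idomainType) := {ffun expvec -> R}.

(* Delta of a divided power monomial: the words u_1 (x) ... (x) u_4 of basis
   vectors in which b_l occurs exactly n l times. A word is w : 'I_4 -> 'I_4,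
   position r carrying the letter bas (w r). *)
Definition word_of (n : expvec) (w : {ffun 'I_4 -> 'I_4}) : bool :=
  [forall l : 'I_4, #|[set r : 'I_4 | w r == l]| == n l].

(* Gamma_phi(X (x) y_1 /\ ... /\ y_4), expressed as its coordinate on the
   generator x^* /\ y^* /\ z^* /\ w^* of /\^4 U^*:  the wedge
   v_1 /\ ... /\ v_4 of covectors equals det[v_r(b_c)] x^*/\y^*/\z^*/\w^*. *)
Definition Gamma (R : idomainType) (phi : cubic R) (X : D4 R)
  (y : 'I_4 -> 'rV[R]_4) : R :=
  \sum_(n : expvec | deg4 n) X n *
    \sum_(w : {ffun 'I_4 -> 'I_4} | word_of n w)
       \det (\matrix_(r < 4, c < 4) contr2 phi (bas R (w r)) (y r) 0 c).

From HB Require Import structures.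
From mathcomp Require Import all_boot all_order all_algebra.
From mathcomp Require Import ring.

Set Implicit Arguments.
Unset Strict Implicit.
Unset Printing Implicit Defensive.
Import GRing.Theory.
Local Open Scope ring_scope.

(* Evaluate Gamma_phi3 on X (x) x/\y/\z/\w for the nine divided power monomials
   X = x^(2)y^(2), x^(2)yw, x^(2)w^(2), x^(2)z^(2), x^(2)zw, x^(2)yz, xz^(2)w,
   xyz^(2), xz^(3).  If all nine values vanish then, as a != 0, nine polynomial
   relations hold between d, ..., m.  In a domain they force the 2 x 6 matrix
   formed by the nonzero values of y phi3 and w phi3 to have rank at most one,
   because the square of each of its 2 x 2 minors is an explicit combination of
   the relations.  A left kernel vector (b, c) of that matrix gives the nonzero
   element ell = b y + c w with ell phi3 = 0, contradicting (b). *)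

Section DomainFacts.
Variable R : idomainType.

Definition minor_eq0 (u v : R * R) : bool := u.1 * v.2 == v.1 * u.2.

Lemma rank_one_kernel (cols : seq (R * R)) :
  pairwise minor_eq0 cols ->
  exists2 bc : R * R, (bc.1 != 0) || (bc.2 != 0) &
    {in cols, forall u, bc.1 * u.1 + bc.2 * u.2 = 0}.
Proof.
move=> cols_minors; have /allrelP minors : all2rel minor_eq0 cols.
  rewrite -pairwise_all2rel //; first by move=> u; exact: eqxx.
  by move=> u v; rewrite /minor_eq0 eq_sym.
have [/hasP[u u_col u_neq0] | /hasPn cols0] :=
  boolP (has (fun u : R * R => (u.1 != 0) || (u.2 != 0)) cols).
  exists (u.2, - u.1) => [|v v_col] /=; first by rewrite oppr_eq0 orbC.
  by rewrite mulNr (eqP (minors u v u_col v_col)) mulrC subrr.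
exists (1, 0) => [|u /cols0] /=; first by rewrite oner_eq0.
by rewrite negb_or !negbK => /andP[/eqP-> _]; rewrite mulr0 mul0r addr0.
Qed.

Lemma eq_of_pow_subr_eq0 n (c x y : R) : (x - y) ^+ n.+1 = c -> c = 0 -> x = y.
Proof. by move=> <- /eqP; rewrite expf_eq0 subr_eq0 => /eqP. Qed.

End DomainFacts.

Arguments minor_eq0 {R}.
Arguments eq_of_pow_subr_eq0 {R} n c {x y}.

Section LaplaceExpansion.
Variable R : idomainType.

(* Laplace expansion along the first row, stated for entries given as a function
   of natural number indices so that it reduces by computation on concrete
   matrices. *)
Fixpoint det_fun n (F : nat -> nat -> R) : R :=
  if n is n'.+1 then
    foldr (fun c acc => (-1) ^+ c * F 0%N c *
      det_fun n' (fun r q => F r.+1 (if (c <= q)%N then q.+1 else q)) + acc) 0 (iota 0 n)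
  else 1.

Lemma det_fun_mx n (F : nat -> nat -> R) :
  \det (\matrix_(r < n, q < n) F r q) = det_fun n F.
Proof.
elim: n F => [|n IHn] F; first by rewrite det_mx00.
rewrite (expand_det_row _ ord0); transitivity (\sum_(0 <= c < n.+1) ((-1) ^+ c * F 0%N c *
    det_fun n (fun r q => F r.+1 (if (c <= q)%N then q.+1 else q)))).
  rewrite big_mkord; apply: eq_bigr => c _; rewrite /cofactor mxE mulrCA mulrA add0n -IHn.
  by congr (_ * \det _); apply/matrixP => r q; rewrite !mxE /= /bump add1n; case: leqP.
by rewrite /index_iota subn0 unlock.
Qed.

End LaplaceExpansion.

Fixpoint codes (m n : nat) : seq (seq nat) :=
  if n is n'.+1 then [seq x :: c | x <- iota 0 m, c <- codes m n'] else [:: [::]].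

Lemma mem_codes m n c : (c \in codes m n) = (size c == n) && all (fun x => x < m)%N c.
Proof.
elim: n c => [|n IHn] [|x c] //=; first by apply/allpairsP => -[[y d] []].
rewrite eqSS andbCA -IHn.
apply/allpairsP/andP => [[[y d] /= [y_m d_n [-> ->]]] | [x_m c_n]].
  by rewrite mem_iota in y_m.
by exists (x, c); rewrite mem_iota leq0n.
Qed.

Lemma codes_uniq m n : uniq (codes m n).
Proof.
elim: n => //= n IHn; rewrite allpairs_uniq ?iota_uniq //.
by move=> [x c] [y d] _ _ [-> ->].
Qed.

Definition code (w : {ffun 'I_4 -> 'I_4}) : seq nat := [seq val (w r) | r <- enum 'I_4].

Lemma size_code (w : {ffun 'I_4 -> 'I_4}) : size (code w) = 4%N.
Proof. by rewrite size_map size_enum_ord. Qed.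

Lemma nth_code (w : {ffun 'I_4 -> 'I_4}) (r : 'I_4) : nth 0%N (code w) r = w r.
Proof. by rewrite (nth_map r) ?size_enum_ord // nth_ord_enum. Qed.

Lemma big_ffun_code (V : nmodType) (F : seq nat -> V) :
  \sum_(w : {ffun 'I_4 -> 'I_4}) F (code w) = \sum_(c <- codes 4 4) F c.
Proof.
rewrite -(big_map code predT F); apply/perm_big/uniq_perm; rewrite ?codes_uniq //.
  rewrite map_inj_uniq ?index_enum_uniq // => w1 w2 eq_code; apply/ffunP => r.
  by move: (nth_code w1 r); rewrite eq_code nth_code => /val_inj.
move=> c; rewrite mem_codes; apply/mapP/idP => [[w _ ->] | /andP[/eqP c_size c_small]].
  by rewrite size_code eqxx all_map; apply/allP => r _ /=.
exists [ffun r : 'I_4 => inord (nth 0%N c r)]; first by rewrite mem_index_enum.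
apply: (@eq_from_nth _ 0%N) => [|r]; rewrite ?size_code ?c_size // => r_lt4.
rewrite (nth_code _ (Ordinal r_lt4)) ffunE inordK //.
by rewrite (allP c_small) // mem_nth ?c_size.
Qed.

Lemma card_letter (w : {ffun 'I_4 -> 'I_4}) (l : 'I_4) :
  #|[set r | w r == l]| = count_mem (val l) (code w).
Proof. by rewrite cardsE cardE size_filter /code count_map enumT. Qed.

Section GammaOnBasis.
Variable R : idomainType.

(* phi (b_p b_q b_r) for natural number indices; on ordinals it is convertible
   to phi (expo3 p q r). *)
Definition cubic_at (phi : cubic R) (p q r : nat) : R :=
  phi (fun l : 'I_4 => ((p == l) + (q == l) + (r == l))%N).

Definition expvec_of (s : seq nat) : expvec := [ffun l : 'I_4 => inord (nth 0%N s l)].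

Definition dmono (s : seq nat) : D4 R := [ffun n => (n == expvec_of s)%:R].

Definition word_of_seq (s c : seq nat) : bool :=
  all (fun l => count_mem l c == nth 0%N s l) (iota 0 4).

Definition words (s : seq nat) : seq (seq nat) := [seq c <- codes 4 4 | word_of_seq s c].

Lemma word_of_code (s : seq nat) (w : {ffun 'I_4 -> 'I_4}) :
  all (fun x => x < 5)%N s -> word_of (expvec_of s) w = word_of_seq s (code w).
Proof.
move=> s_small; have nth_small x : (nth 0%N s x < 5)%N.
  by case: (ltnP x (size s)) => [/(mem_nth 0%N)/(allP s_small)|/(nth_default 0%N)->].
apply/forallP/allP => [word_w x | word_w x].
  rewrite mem_iota => /andP[_ x_lt4]; move: (word_w (Ordinal x_lt4)).
  by rewrite card_letter ffunE inordK.
by rewrite card_letter ffunE inordK // word_w // mem_iota /=.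
Qed.

Lemma evalc_bas2 (phi : cubic R) (u : 'rV[R]_4) (q r : 'I_4) :
  evalc phi u (bas R q) (bas R r) = \sum_(p < 4) u 0 p * phi (expo3 p q r).
Proof.
apply: eq_bigr => p _; rewrite (bigD1 q) //= [X in _ + X]big1 => [|q' q'_neq]; last first.
  by apply: big1 => r' _; rewrite !mxE (negbTE q'_neq) mulr0 !mul0r.
rewrite addr0 (bigD1 r) //= [X in _ + X]big1 => [|r' r'_neq]; last first.
  by rewrite !mxE (negbTE r'_neq) mulr0 mul0r.
by rewrite !mxE !eqxx !mulr1 addr0.
Qed.

Lemma evalc_bas3 (phi : cubic R) (p q r : 'I_4) :
  evalc phi (bas R p) (bas R q) (bas R r) = phi (expo3 p q r).
Proof.
rewrite evalc_bas2 (bigD1 p) //= big1 => [|p' p'_neq]; last first.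
  by rewrite !mxE (negbTE p'_neq) mul0r.
by rewrite !mxE !eqxx mul1r addr0.
Qed.

Lemma contr1_comb_bas (phi : cubic R) (b c : R) (p p' q r : 'I_4) :
  contr1 phi (b *: bas R p + c *: bas R p') q r =
  b * phi (expo3 p q r) + c * phi (expo3 p' q r).
Proof.
rewrite mxE !evalc_bas2 -!evalc_bas3 !evalc_bas2 !mulr_sumr -big_split /=.
by apply: eq_bigr => s _; rewrite !mxE mulrDl !mulrA.
Qed.

Lemma Gamma_dmono_bas (phi : cubic R) (s : seq nat) :
  all (fun x => x < 5)%N s -> deg4 (expvec_of s) ->
  Gamma phi (dmono s) (bas R) =
  \sum_(c <- words s) det_fun 4 (fun r q => cubic_at phi (nth 0%N c r) r q).
Proof.
move=> s_small s_deg; rewrite /Gamma (bigD1 (expvec_of s)) //= [X in _ + X]big1 => [|n]; last first.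
  by case/andP=> _ n_neq; rewrite ffunE (negbTE n_neq) mul0r.
rewrite ffunE eqxx mul1r addr0 big_mkcond /=.
pose G c := if word_of_seq s c then det_fun 4 (fun r q => cubic_at phi (nth 0%N c r) r q) else 0.
rewrite (eq_bigr (fun w => G (code w))) => [|w _].
  by rewrite big_ffun_code big_filter [RHS]big_mkcond.
rewrite /G word_of_code //; case: ifP => // _; rewrite -det_fun_mx; congr (\det _).
by apply/matrixP => r q; rewrite !mxE evalc_bas3 nth_code.
Qed.

End GammaOnBasis.

Ltac eval_words :=
  match goal with |- context [words ?s] =>
    let v := eval vm_compute in (words s) in change (words s) with v end.

Definition gamma_monomials : seq (seq nat) :=
  [:: [:: 2; 2; 0; 0]; [:: 2; 1; 0; 1]; [:: 2; 0; 0; 2]; [:: 2; 0; 2; 0]; [:: 2; 0; 1; 1];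
      [:: 2; 1; 1; 0]; [:: 1; 0; 2; 1]; [:: 1; 1; 2; 0]; [:: 1; 0; 3; 0]]%N.

Section Phi3.
Variables (R : idomainType) (a d e f g h i j k l m : R).

Local Notation phi := (phi3 a d e f g h i j k l m).
Local Notation y := (@Ordinal 4 1 isT).
Local Notation w := (@Ordinal 4 3 isT).

Local Notation gamma_x2y2 := (f * i - h ^+ 2).
Local Notation gamma_x2yw := (i * m - f * h).
Local Notation gamma_x2w2 := (h * m - f ^+ 2).
Local Notation gamma_x2z2 := (g * l - e ^+ 2).
Local Notation gamma_x2zw := (g * m - 2 * e * f + h * l).
Local Notation gamma_x2yz := (i * l - 2 * e * h + f * g).
Local Notation gamma_xz2w := (g * j * m - g * k * l - d ^+ 2 * m + 2 * d * f * k
  - 2 * e * f * j + h * j * l - h * k ^+ 2 + e ^+ 2 * k).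
Local Notation gamma_xyz2 := (i * j * l - i * k ^+ 2 - d * g * l + 2 * d * h * k
  - 2 * e * h * j + f * g * j - d ^+ 2 * f + d * e ^+ 2).
Local Notation gamma_xz3 := (g * j * l - g * k ^+ 2 - d ^+ 2 * l + 2 * d * e * k - e ^+ 2 * j).

(* The values of (y phi3, w phi3) at z^2, y^2, yw, w^2, yz and zw; all other
   values of y phi3 and w phi3 on monomials are 0. *)
Local Notation yw_quadratic := [:: (i, h); (h, f); (f, m); (g, e); (e, l)].
Local Notation yw_coefs := ((d, k) :: yw_quadratic).

(* phi3 reads its argument at inord 1, 2, 3, which do not reduce by computation. *)
Let inord_lit : ((inord 1 : 'I_4) = Ordinal (isT : 1 < 4)%N) *
  ((inord 2 : 'I_4) = Ordinal (isT : 2 < 4)%N) * ((inord 3 : 'I_4) = Ordinal (isT : 3 < 4)%N).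
Proof. by split; [split|]; apply: val_inj; rewrite /= inordK. Qed.

Local Ltac eval_Gamma :=
  rewrite Gamma_dmono_bas //;
  [eval_words; rewrite !big_cons big_nil /cubic_at /phi3 !inord_lit /=; ring
  | by rewrite /deg4 !big_ord_recr big_ord0 !ffunE /= !inordK].

Lemma Gamma_x2y2 : Gamma phi (dmono R [:: 2; 2; 0; 0]%N) (bas R) = a * gamma_x2y2.
Proof. by eval_Gamma. Qed.

Lemma Gamma_x2yw : Gamma phi (dmono R [:: 2; 1; 0; 1]%N) (bas R) = a * gamma_x2yw.
Proof. by eval_Gamma. Qed.

Lemma Gamma_x2w2 : Gamma phi (dmono R [:: 2; 0; 0; 2]%N) (bas R) = a * gamma_x2w2.
Proof. by eval_Gamma. Qed.

Lemma Gamma_x2z2 : Gamma phi (dmono R [:: 2; 0; 2; 0]%N) (bas R) = a * gamma_x2z2.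
Proof. by eval_Gamma. Qed.

Lemma Gamma_x2zw : Gamma phi (dmono R [:: 2; 0; 1; 1]%N) (bas R) = a * gamma_x2zw.
Proof. by eval_Gamma. Qed.

Lemma Gamma_x2yz : Gamma phi (dmono R [:: 2; 1; 1; 0]%N) (bas R) = a * gamma_x2yz.
Proof. by eval_Gamma. Qed.

Lemma Gamma_xz2w : Gamma phi (dmono R [:: 1; 0; 2; 1]%N) (bas R) = gamma_xz2w.
Proof. by eval_Gamma. Qed.

Lemma Gamma_xyz2 : Gamma phi (dmono R [:: 1; 1; 2; 0]%N) (bas R) = gamma_xyz2.
Proof. by eval_Gamma. Qed.

Lemma Gamma_xz3 : Gamma phi (dmono R [:: 1; 0; 3; 0]%N) (bas R) = gamma_xz3.
Proof. by eval_Gamma. Qed.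

Lemma yw_coefs_mem (q r : 'I_4) :
  (phi (expo3 y q r), phi (expo3 w q r)) \in (0, 0) :: yw_coefs.
Proof.
rewrite /phi3 !inord_lit.
by case: q r => [[|[|[|[|//]]]] ?] [[|[|[|[|//]]]] ?]; rewrite /= !inE eqxx ?orbT.
Qed.

Lemma contr1_yw_eq0 (b c : R) : {in yw_coefs, forall u, b * u.1 + c * u.2 = 0} ->
  contr1 phi (b *: bas R y + c *: bas R w) = 0.
Proof.
move=> kernel; apply/matrixP => q r; rewrite contr1_comb_bas mxE.
by case/predU1P: (yw_coefs_mem q r) => [[-> ->]|/kernel]; rewrite ?mulr0 ?addr0.
Qed.

Lemma yw_minors_quadratic :
  gamma_x2y2 = 0 -> gamma_x2yw = 0 -> gamma_x2w2 = 0 ->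
  gamma_x2z2 = 0 -> gamma_x2zw = 0 -> gamma_x2yz = 0 ->
  pairwise minor_eq0 yw_quadratic.
Proof.
move=> E1 E2 E3 E4 E5 E6; have gamma0 := (E1, E2, E3, E4, E5, E6).
have if_hh : i * f = h * h.
  by apply: (eq_of_pow_subr_eq0 0%N gamma_x2y2); [ring | rewrite !gamma0].
have im_fh : i * m = f * h.
  by apply: (eq_of_pow_subr_eq0 0%N gamma_x2yw); [ring | rewrite !gamma0].
have hm_ff : h * m = f * f.
  by apply: (eq_of_pow_subr_eq0 0%N gamma_x2w2); [ring | rewrite !gamma0].
have gl_ee : g * l = e * e.
  by apply: (eq_of_pow_subr_eq0 0%N gamma_x2z2); [ring | rewrite !gamma0].
have ie_gh : i * e = g * h.
  apply: (eq_of_pow_subr_eq0 1%N (- g ^+ 2 * gamma_x2y2 + g * i * gamma_x2yz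
    - i ^+ 2 * gamma_x2z2)); [ring | by rewrite !gamma0; ring].
have il_eh : i * l = e * h.
  apply: (eq_of_pow_subr_eq0 1%N (- e ^+ 2 * gamma_x2y2 - f * i * gamma_x2z2
    + i * l * gamma_x2yz)); [ring | by rewrite !gamma0; ring].
have he_gf : h * e = g * f.
  apply: (eq_of_pow_subr_eq0 1%N ((g * l - e ^+ 2) * gamma_x2y2 - f * i * gamma_x2z2
    + g * h * gamma_x2zw - g ^+ 2 * gamma_x2w2)); [ring | by rewrite !gamma0; ring].
have hl_ef : h * l = e * f.
  apply: (eq_of_pow_subr_eq0 1%N (h * l * gamma_x2zw - f ^+ 2 * gamma_x2z2
    - g * l * gamma_x2w2)); [ring | by rewrite !gamma0; ring].
have fe_gm : f * e = g * m.
  apply: (eq_of_pow_subr_eq0 1%N (- f ^+ 2 * gamma_x2z2 - g * l * gamma_x2w2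
    + g * m * gamma_x2zw)); [ring | by rewrite !gamma0; ring].
have fl_em : f * l = e * m.
  apply: (eq_of_pow_subr_eq0 1%N (- l ^+ 2 * gamma_x2w2 + l * m * gamma_x2zw
    - m ^+ 2 * gamma_x2z2)); [ring | by rewrite !gamma0; ring].
rewrite /= /minor_eq0 /= if_hh im_fh ie_gh il_eh hm_ff he_gf hl_ef fe_gm fl_em gl_ee.
by rewrite !eqxx.
Qed.

Lemma yw_minors_z2 :
  gamma_x2y2 = 0 -> gamma_x2w2 = 0 -> gamma_x2z2 = 0 -> gamma_x2zw = 0 ->
  gamma_x2yz = 0 -> gamma_xz2w = 0 -> gamma_xyz2 = 0 -> gamma_xz3 = 0 ->
  all (minor_eq0 (d, k)) yw_quadratic.
Proof.
move=> E1 E3 E4 E5 E6 N1 N2 N3; have gamma0 := (E1, E3, E4, E5, E6, N1, N2, N3).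
have dh_ik : d * h = i * k.
  apply: (eq_of_pow_subr_eq0 1%N (- d ^+ 2 * gamma_x2y2 - i * gamma_xyz2
    + i * j * gamma_x2yz - d * i * gamma_x2z2)); [ring | by rewrite !gamma0; ring].
have df_hk : d * f = h * k.
  apply: (eq_of_pow_subr_eq0 1%N (h * j * gamma_x2zw - h * gamma_xz2w
    - d ^+ 2 * gamma_x2w2 - h * k * gamma_x2z2)); [ring | by rewrite !gamma0; ring].
have dm_fk : d * m = f * k.
  apply: (eq_of_pow_subr_eq0 1%N (j * m * gamma_x2zw - k ^+ 2 * gamma_x2w2
    - m * gamma_xz2w - k * m * gamma_x2z2)); [ring | by rewrite !gamma0; ring].
have de_gk : d * e = g * k.
  apply: (eq_of_pow_subr_eq0 1%N ((g * j - d ^+ 2) * gamma_x2z2 - g * gamma_xz3));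
    [ring | by rewrite !gamma0; ring].
have dl_ek : d * l = e * k.
  apply: (eq_of_pow_subr_eq0 1%N ((j * l - k ^+ 2) * gamma_x2z2 - l * gamma_xz3));
    [ring | by rewrite !gamma0; ring].
by rewrite /= /minor_eq0 /= dh_ik df_hk dm_fk de_gk dl_ek !eqxx.
Qed.

Lemma Gamma_eq0_yw_minors : a != 0 ->
  {in gamma_monomials, forall s, Gamma phi (dmono R s) (bas R) = 0} ->
  pairwise minor_eq0 yw_coefs.
Proof.
move=> a_neq0 Gamma0.
have a_cancel x : a * x = 0 -> x = 0 by move/eqP; rewrite mulf_eq0 (negbTE a_neq0) => /eqP.
have E1 : gamma_x2y2 = 0 by apply: a_cancel; rewrite -Gamma_x2y2 Gamma0.
have E2 : gamma_x2yw = 0 by apply: a_cancel; rewrite -Gamma_x2yw Gamma0.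
have E3 : gamma_x2w2 = 0 by apply: a_cancel; rewrite -Gamma_x2w2 Gamma0.
have E4 : gamma_x2z2 = 0 by apply: a_cancel; rewrite -Gamma_x2z2 Gamma0.
have E5 : gamma_x2zw = 0 by apply: a_cancel; rewrite -Gamma_x2zw Gamma0.
have E6 : gamma_x2yz = 0 by apply: a_cancel; rewrite -Gamma_x2yz Gamma0.
have N1 : gamma_xz2w = 0 by rewrite -Gamma_xz2w Gamma0.
have N2 : gamma_xyz2 = 0 by rewrite -Gamma_xyz2 Gamma0.
have N3 : gamma_xz3 = 0 by rewrite -Gamma_xz3 Gamma0.
by rewrite pairwise_cons yw_minors_z2 ?yw_minors_quadratic.
Qed.

Lemma Gamma_eq0_contr1_kernel : a != 0 ->
  {in gamma_monomials, forall s, Gamma phi (dmono R s) (bas R) = 0} ->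
  exists2 ell : 'rV[R]_4, ell != 0 & contr1 phi ell = 0.
Proof.
move=> a_neq0 /(Gamma_eq0_yw_minors a_neq0)/rank_one_kernel[[b c] /= bc_neq0 kernel].
exists (b *: bas R y + c *: bas R w); last exact: contr1_yw_eq0.
apply: contraTneq bc_neq0 => /matrixP ell0.
move: (ell0 0 y) (ell0 0 w); rewrite !mxE /= mulr1 mulr0 addr0 mulr0 mulr1 add0r.
by move=> -> ->; rewrite eqxx.
Qed.

End Phi3.

Theorem proposition5p1 (R : idomainType) (a d e f g h i j k l m : R) :
  a != 0 ->
  (forall ell : 'rV[R]_4, ell != 0 ->
     contr1 (phi3 a d e f g h i j k l m) ell != 0) ->
  exists (X : D4 R) (y : 'I_4 -> 'rV[R]_4),
    Gamma (phi3 a d e f g h i j k l m) X y != 0.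
Proof.
move=> a_neq0 phi3_nondeg; set phi := phi3 a d e f g h i j k l m.
have [/hasP[s _ Gamma_s] | /hasPn Gamma0] :=
  boolP (has (fun s => Gamma phi (dmono R s) (bas R) != 0) gamma_monomials).
  by exists (dmono R s), (bas R).
have Gamma_eq0 : {in gamma_monomials, forall s, Gamma phi (dmono R s) (bas R) = 0}.
  by move=> s /Gamma0/negPn/eqP.
have [ell ell_neq0 ell_phi3] := Gamma_eq0_contr1_kernel a_neq0 Gamma_eq0.
by move: (phi3_nondeg ell ell_neq0); rewrite ell_phi3 eqxx.
Qed.
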